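(* Under the Setting and Algorithm in the context, suppose $$\frac{N-s+1}{2}\min_{k\in\mathcal N}\gamma_k\eta_k>D_{\mathcal X}^2+\frac12\sum_{k\in\mathcal B}\gamma_k^2L_f^2+\frac12\sum_{k\in\mathcal N}\gamma_k^2L_{g,\mathcal X}^2.$$ Then $\mathcal B\neq\emptyset$ (so $\bar x_{N,s}$ is well defined), and moreover either (i) $|\mathcal B|\ge(N-s+1)/2$, or (ii) $\sum_{k\in\mathcal B}\gamma_k\langle f'(x_k),x_k-x^*\rangle<0$.
   Context: Setting. $\mathcal X\subset\mathbb R^n$ is convex and compact; $f:\mathcal X\to\mathbb R$ is convex and $L_f$-Lipschitz; $\Delta\subset\mathbb R^d$ is compact; $g:\mathcal X\times\Delta\to\mathbb R$ is such that for every $\delta\in\Delta$, $x\mapsto g(x,\delta)$ is convex and $L_{g,\mathcal X}$-Lipschitz, and for every $x\in\mathcal X$, $\delta\mapsto g(x,\delta)$ is $L_{g,\Delta}$-Lipschitz. Let $G(x):=\max_{\delta\in\Delta}g(x,\delta)$ and assume the problem $\min_{x\in\mathcal X}\{f(x):G(x)\le0\}$ has an optimal solution $x^*$. Norms are Euclidean. $f'(x)$ denotes a subgradient of $f$ at $x$ and $g'(x,\delta)$ a subgradient of $g(\cdot,\delta)$ at $x$. Let $\omega_{\mathcal X}:\mathcal X\to\mathbb R$ be continuously differentiable and $1$-strongly convex; $V(x,z):=\omega_{\mathcal X}(z)-\omega_{\mathcal X}(x)-\langle\nabla\omega_{\mathcal X}(x),z-x\rangle$; prox-mapping $P_{x,\mathcal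 X}(y):=\arg\min_{z\in\mathcal X}\{\langle y,z\rangle+V(x,z)\}$; $D_{\mathcal X}:=\sqrt{\max_{x,z\in\mathcal X}V(x,z)}$. Algorithm (inexact CSA). Inputs: $N\ge1$, $x_1\in\mathcal X$, tolerances $\eta_k>0$, step-sizes $\gamma_k>0$. For $k=1,\dots,N$: choose some $\delta_k\in\Delta$ (an approximate maximizer of $g(x_k,\cdot)$); set $h_k=f'(x_k)$ if $g(x_k,\delta_k)\le\eta_k$ and $h_k=g'(x_k,\delta_k)$ otherwise; set $x_{k+1}=P_{x_k,\mathcal X}(\gamma_kh_k)$. For $1\le s\le N$ let $I=\{s,\dots,N\}$, $\mathcal B:=\{k\in I: g(x_k,\delta_k)\le\eta_k\}$, $\mathcal N:=I\setminus\mathcal B$, and output $\bar x_{N,s}:=\sum_{k\in\mathcal B}\gamma_kx_k/\sum_{k\in\mathcal B}\gamma_k$. (The minimum over an empty set is $+\infty$.) *)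

From Stdlib Require Import Reals.
From mathcomp Require Import ssreflect ssrfun ssrbool eqtype ssrnat seq fintype bigop.
Set Implicit Arguments. Unset Strict Implicit.
Open Scope R_scope.

Definition vec (n : nat) := 'I_n -> R.
Definition dot {n} (x y : vec n) : R := \big[Rplus/0]_(i < n) (x i * y i).
Definition norm {n} (x : vec n) : R := sqrt (dot x x).
Definition vadd {n} (x y : vec n) : vec n := fun i => x i + y i.
Definition vsub {n} (x y : vec n) : vec n := fun i => x i - y i.
Definition vscale {n} (a : R) (x : vec n) : vec n := fun i => a * x i.

Definition convex_set {n} (S : vec n -> Prop) : Prop :=
  forall x y t, S x -> S y -> 0 <= t <= 1 -> S (vadd (vscale t x) (vscale (1 - t) y)).

Definition compact_set {n} (S : vec n -> Prop) : Prop :=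
  forall u : nat -> vec n, (forall k, S (u k)) ->
  exists (phi : nat -> nat) (l : vec n),
    (forall i j, (i < j)%N -> (phi i < phi j)%N) /\ S l /\
    Un_cv (fun k => norm (vsub (u (phi k)) l)) 0.

Definition convex_fun {n} (f : vec n -> R) : Prop :=
  forall x y t, 0 <= t <= 1 ->
    f (vadd (vscale t x) (vscale (1 - t) y)) <= t * f x + (1 - t) * f y.

Definition lipschitz_on {n} (S : vec n -> Prop) (f : vec n -> R) (L : R) : Prop :=
  forall x y, S x -> S y -> Rabs (f x - f y) <= L * norm (vsub x y).

Definition is_subgradient {n} (f : vec n -> R) (x v : vec n) : Prop :=
  forall z, f x + dot v (vsub z x) <= f z.

Definition has_gradient_at {n} (w : vec n -> R) (x v : vec n) : Prop :=
  forall eps, 0 < eps -> exists del, 0 < del /\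
    forall h, norm h < del -> Rabs (w (vadd x h) - w x - dot v h) <= eps * norm h.

Definition C1_on {n} (S : vec n -> Prop) (w : vec n -> R) (gw : vec n -> vec n) : Prop :=
  (forall x, S x -> has_gradient_at w x (gw x)) /\
  (forall x, S x -> forall eps, 0 < eps -> exists del, 0 < del /\
     forall y, S y -> norm (vsub y x) < del -> norm (vsub (gw y) (gw x)) < eps).

Definition strongly_convex_on {n} (S : vec n -> Prop) (w : vec n -> R) (mu : R) : Prop :=
  forall x y t, S x -> S y -> 0 <= t <= 1 ->
    w (vadd (vscale t x) (vscale (1 - t) y))
      <= t * w x + (1 - t) * w y - mu / 2 * t * (1 - t) * (norm (vsub x y)) ^ 2.

Definition bregman {n} (w : vec n -> R) (gw : vec n -> vec n) (x z : vec n) : R :=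
  w z - w x - dot (gw x) (vsub z x).

Definition is_prox {n} (X : vec n -> Prop) (w : vec n -> R) (gw : vec n -> vec n)
  (x y z : vec n) : Prop :=
  X z /\ forall u, X u -> dot y z + bregman w gw x z <= dot y u + bregman w gw x u.

Definition is_max_over {A : Type} (S : A -> Prop) (phi : A -> R) (m : R) : Prop :=
  (exists a, S a /\ phi a = m) /\ (forall a, S a -> phi a <= m).

Definition G_le0 {n p} (g : vec n -> vec p -> R) (Delta : vec p -> Prop) (x : vec n) : Prop :=
  exists Gx, is_max_over Delta (g x) Gx /\ Gx <= 0.

Definition is_optimal {n p} (X : vec n -> Prop) (f : vec n -> R)
  (g : vec n -> vec p -> R) (Delta : vec p -> Prop) (xs : vec n) : Prop :=
  X xs /\ G_le0 g Delta xs /\ forall x, X x -> G_le0 g Delta x -> f xs <= f x.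

Definition Rleb (a b : R) : bool := if Rle_dec a b then true else false.

Definition csa_dir {n p} (fsub : vec n -> vec n) (gsub : vec n -> vec p -> vec n)
  (g : vec n -> vec p -> R) (x : vec n) (d : vec p) (eta : R) : vec n :=
  if Rle_dec (g x d) eta then fsub x else gsub x d.

(* membership of k in the index set B (given k in I = {s..N}) *)
Definition inB {n p} (g : vec n -> vec p -> R) (x : nat -> vec n) (delta : nat -> vec p)
  (eta : nat -> R) (k : nat) : bool :=
  Rleb (g (x k) (delta k)) (eta k).

From Pilot Require Import Defs.
From Stdlib Require Import Reals Lra Psatz FunctionalExtensionality.
From mathcomp Require Import ssreflect ssrfun ssrbool eqtype ssrnat seq fintype bigop.
From mathcomp Require Import zify Rstruct.
Open Scope R_scope.
Set Implicit Arguments.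
Unset Strict Implicit.

(* Each iteration of CSA is a mirror-descent step, so the prox inequality
     gamma_k <h_k, x_k - x⋆> <= gamma_k^2 |h_k|^2 / 2 + V(x_k, x⋆) - V(x_{k+1}, x⋆)
   telescopes over k = s..N to  sum_k gamma_k <h_k, x_k - x⋆> <= T, where T is the
   right-hand side of the hypothesis.  On an infeasible step h_k is a subgradient of
   g(., delta_k), and g(x⋆, delta_k) <= 0 < eta_k < g(x_k, delta_k), so its term exceeds
   gamma_k eta_k.  If fewer than half of the steps are feasible, the infeasible ones
   alone contribute more than (N-s+1)/2 * min gamma_k eta_k > T, so the feasible part
   of the sum is negative; and if no step were feasible, that part would be the empty
   sum 0. *)

Lemma Rle_plus_epsilon_scaled a b c : 0 <= c ->
  (forall eps, 0 < eps -> a <= b + eps * c) -> a <= b.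
Proof.
move=> c0 H; apply: Rle_plus_epsilon => eps eps0.
have e0 : 0 < eps / (c + 1) by apply: Rdiv_lt_0_compat; lra.
have : eps / (c + 1) * (c + 1) = eps by field; lra.
have := H _ e0; lra.
Qed.

Section RealSums.
Variable I : eqType.
Implicit Types (r : seq I) (P : pred I) (F G : I -> R).

Lemma big_Rle r P F G : {in r, forall i, P i -> F i <= G i} ->
  \big[Rplus/0]_(i <- r | P i) F i <= \big[Rplus/0]_(i <- r | P i) G i.
Proof.
move=> FG; rewrite big_seq_cond [X in _ <= X]big_seq_cond.
apply: (big_ind2 Rle) => [|*|i /andP[ri Pi]]; [lra | lra | exact: FG].
Qed.

Lemma big_Rge0 r P F : (forall i, P i -> 0 <= F i) ->
  0 <= \big[Rplus/0]_(i <- r | P i) F i.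
Proof. by move=> F0; apply: big_ind => [|*|i /F0]; lra. Qed.

Lemma big_Rlt r P F G : {in r, forall i, P i -> F i < G i} -> has P r ->
  \big[Rplus/0]_(i <- r | P i) F i < \big[Rplus/0]_(i <- r | P i) G i.
Proof.
move=> FG /hasP[i ri Pi]; rewrite !(big_rem i ri) Pi /=.
have := FG i ri Pi.
have := @big_Rle (rem i r) P F G (fun j rj Pj => Rlt_le _ _ (FG j (mem_rem rj) Pj)).
lra.
Qed.

Lemma big_Rconst r P c :
  \big[Rplus/0]_(i <- r | P i) c = INR (count P r) * c.
Proof.
rewrite big_const_seq; elim: (count P r) => [|m IH]; first by rewrite /=; ring.
by rewrite iterS IH S_INR; ring.
Qed.

End RealSums.

Lemma big_Rtelescope (b : nat -> R) m n : (m <= n)%N ->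
  \big[Rplus/0]_(m <= k < n) (b k - b k.+1) = b m - b n.
Proof.
elim: n => [|n IH]; first by rewrite leqn0 => /eqP ->; rewrite big_geq //; ring.
rewrite leq_eqVlt => /orP[/eqP <-|]; first by rewrite big_geq //; ring.
by rewrite ltnS => mn; rewrite big_nat_recr //= IH //; ring.
Qed.

Lemma sum_le_telescope (a e b : nat -> R) m n : (m <= n)%N ->
  (forall k, (m <= k < n)%N -> a k <= e k + (b k - b k.+1)) ->
  \big[Rplus/0]_(m <= k < n) a k <= \big[Rplus/0]_(m <= k < n) e k + (b m - b n).
Proof.
move=> mn H; rewrite -big_Rtelescope // -big_split.
by apply: big_Rle => k; rewrite mem_index_iota => /H.
Qed.

Section Dot.
Variable n : nat.
Implicit Types a b c : vec n.

Lemma dot_comm a b : dot a b = dot b a.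
Proof. by rewrite /dot; apply: eq_bigr => i _; ring. Qed.

Lemma dot_addr a b c : dot a (vadd b c) = dot a b + dot a c.
Proof. by rewrite /dot -big_split /=; apply: eq_bigr => i _; rewrite /vadd; ring. Qed.

Lemma dot_scaler a t b : dot a (vscale t b) = t * dot a b.
Proof. by rewrite /dot big_distrr /=; apply: eq_bigr => i _; rewrite /vscale; ring. Qed.

Lemma dot_subr a b c : dot a (vsub b c) = dot a b - dot a c.
Proof.
have -> : vsub b c = vadd b (vscale (-1) c).
  by apply: functional_extensionality => i; rewrite /vsub /vadd /vscale; ring.
by rewrite dot_addr dot_scaler; ring.
Qed.

Lemma dot_subl a b c : dot (vsub b c) a = dot b a - dot c a.
Proof. by rewrite dot_comm dot_subr !(dot_comm a). Qed.

Lemma dot_scalel a t b : dot (vscale t b) a = t * dot b a.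
Proof. by rewrite dot_comm dot_scaler (dot_comm a). Qed.

Lemma dot_ge0 a : 0 <= dot a a.
Proof. by apply: big_Rge0 => i _; apply: Rle_0_sqr. Qed.

Lemma dot_le_half_sq a b : dot a b <= dot a a / 2 + dot b b / 2.
Proof.
have := dot_ge0 (vsub a b).
by rewrite !dot_subl !dot_subr (dot_comm b a); lra.
Qed.

Lemma dot_vsubC a b : dot (vsub a b) (vsub a b) = dot (vsub b a) (vsub b a).
Proof. by rewrite !dot_subl !dot_subr (dot_comm a b); ring. Qed.

Lemma norm_ge0 a : 0 <= norm a.
Proof. exact: sqrt_pos. Qed.

Lemma norm_sq a : norm a * norm a = dot a a.
Proof. exact/sqrt_sqrt/dot_ge0. Qed.

Lemma norm_scale t a : 0 <= t -> norm (vscale t a) = t * norm a.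
Proof.
move=> t0; rewrite /norm dot_scalel dot_scaler -Rmult_assoc.
by rewrite sqrt_mult_alt ?sqrt_square //; nra.
Qed.

Lemma vadd_convex_comb t a b :
  vadd (vscale t a) (vscale (1 - t) b) = vadd b (vscale t (vsub a b)).
Proof. by apply: functional_extensionality => i; rewrite /vadd /vscale /vsub; ring. Qed.

End Dot.

Lemma subgradient_sq_le n (phi : vec n -> R) L y v :
  lipschitz_on (fun _ => True) phi L -> is_subgradient phi y v -> dot v v <= L ^ 2.
Proof.
move=> phi_lip v_sub.
have shift : vsub (vadd y v) y = v.
  by apply: functional_extensionality => i; rewrite /vsub /vadd; ring.
have := v_sub (vadd y v); have := phi_lip (vadd y v) y I I.
rewrite shift -norm_sq => lip sub.
have := Rle_abs (phi (vadd y v) - phi y); have := norm_ge0 v.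
nra.
Qed.

Lemma subgradient_cut n (phi : vec n -> R) y v z :
  is_subgradient phi y v -> phi z <= 0 -> phi y <= dot v (vsub y z).
Proof. by move=> /(_ z) sub z0; rewrite !dot_subr in sub *; lra. Qed.

Lemma has_gradient_along n (w : vec n -> R) y v d eps :
  has_gradient_at w y v -> 0 < eps ->
  exists t, 0 < t <= 1 /\ t <= eps /\
    - (t * eps) <= w (vadd y (vscale t d)) - w y - t * dot v d <= t * eps.
Proof.
move=> grad eps0; have d0 := norm_ge0 d.
have [del [del0 del_bound]] := grad _ (Rdiv_lt_0_compat eps (norm d + 1) eps0 ltac:(lra)).
have [t [t0 [t1 [t_eps t_del]]]] :
    exists t, 0 < t /\ t <= 1 /\ t <= eps /\ t * (norm d + 1) <= del.
  exists (Rmin (Rmin 1 eps) (del / (norm d + 1))).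
  have := Rmin_l (Rmin 1 eps) (del / (norm d + 1)).
  have := Rmin_r (Rmin 1 eps) (del / (norm d + 1)).
  have := Rmin_l 1 eps; have := Rmin_r 1 eps.
  have : del / (norm d + 1) * (norm d + 1) = del by field; lra.
  split; first by apply: Rmin_glb_lt; [apply: Rmin_glb_lt | apply: Rdiv_lt_0_compat]; lra.
  by repeat split; nra.
have td : norm (vscale t d) = t * norm d by apply: norm_scale; lra.
have := del_bound (vscale t d); rewrite td dot_scaler => /(_ ltac:(lra)) bound.
have key : eps / (norm d + 1) * (t * norm d) <= t * eps.
  have : eps / (norm d + 1) * (norm d + 1) = eps by field; lra.
  have := Rmult_lt_0_compat _ _ t0 (Rdiv_lt_0_compat eps (norm d + 1) eps0 ltac:(lra)).
  nra.
exists t; move: bound; split_Rabs; repeat split; lra.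
Qed.

Lemma bregman_three_point n (w : vec n -> R) (gw : vec n -> vec n) x z u :
  bregman w gw x u - bregman w gw z u - bregman w gw x z =
  dot (vsub (gw z) (gw x)) (vsub u z).
Proof. by rewrite /bregman !dot_subr !dot_subl; ring. Qed.

Section Prox.
Variables (n : nat) (X : vec n -> Prop) (w : vec n -> R) (gw : vec n -> vec n).
Hypothesis w_grad : forall y, X y -> has_gradient_at w y (gw y).

Lemma bregman_ge_half_sq : strongly_convex_on X w 1 ->
  forall x z, X x -> X z -> dot (vsub z x) (vsub z x) / 2 <= bregman w gw x z.
Proof.
move=> w_strong x z Xx Xz; set q := dot _ _; have q0 : 0 <= q := dot_ge0 _.
apply: (@Rle_plus_epsilon_scaled _ _ (q / 2 + 1)); first lra.
move=> eps eps0.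
have [t [[t0 t1] [t_eps /proj1 lo]]] := has_gradient_along (vsub z x) (w_grad Xx) eps0.
have := w_strong z x t Xz Xx (conj (Rlt_le _ _ t0) t1).
have sq : norm (vsub z x) ^ 2 = q by rewrite /= Rmult_1_r norm_sq.
rewrite vadd_convex_comb sq /bregman.
have : 0 <= t * (eps - t) * q by apply: Rmult_le_pos => //; apply: Rmult_le_pos; lra.
move=> slack sc; apply: (Rmult_le_reg_l t) => //.
nra.
Qed.

Lemma bregman_ge0 : strongly_convex_on X w 1 ->
  forall x z, X x -> X z -> 0 <= bregman w gw x z.
Proof.
by move=> w_strong x z Xx Xz; have := bregman_ge_half_sq w_strong Xx Xz; have := dot_ge0 (vsub z x); lra.
Qed.

Lemma prox_optimality : convex_set X ->
  forall x y z u, is_prox X w gw x y z -> X u ->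
  0 <= dot y (vsub u z) + dot (vsub (gw z) (gw x)) (vsub u z).
Proof.
move=> X_convex x y z u [Xz z_min] Xu; apply: Rle_plus_epsilon => eps eps0.
have [t [[t0 t1] [_ /proj2 hi]]] := has_gradient_along (vsub u z) (w_grad Xz) eps0.
have := z_min _ (X_convex u z t Xu Xz (conj (Rlt_le _ _ t0) t1)).
rewrite vadd_convex_comb /bregman !dot_subr !dot_addr !dot_scaler !dot_subr => opt.
apply: (Rmult_le_reg_l t) => //.
move: hi; rewrite !dot_subl !dot_subr; lra.
Qed.

Lemma prox_descent : convex_set X -> strongly_convex_on X w 1 ->
  forall x y z u, X x -> is_prox X w gw x y z -> X u ->
  dot y (vsub x u) <= dot y y / 2 + bregman w gw x u - bregman w gw z u.
Proof.
move=> X_convex w_strong x y z u Xx z_prox Xu.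
have opt := prox_optimality X_convex z_prox Xu.
have three := bregman_three_point w gw x z u.
have strong := bregman_ge_half_sq w_strong Xx z_prox.1.
have young := dot_le_half_sq y (vsub x z).
rewrite dot_vsubC in young.
move: opt young; rewrite !(dot_subr y); lra.
Qed.

End Prox.

Lemma half_count_dichotomy (I : eqType) (r : seq I) (P : pred I) (a c : I -> R) T :
  (0 < size r)%N -> 0 <= T ->
  {in r, forall k, ~~ P k -> INR (size r) / 2 * c k > T} ->
  \big[Rplus/0]_(k <- r | P k) a k + \big[Rplus/0]_(k <- r | ~~ P k) c k <= T ->
  has P r /\
  (INR (count P r) >= INR (size r) / 2 \/ \big[Rplus/0]_(k <- r | P k) a k < 0).
Proof.
move=> r_gt0 T0 c_big regret; set M := INR (size r).
have M0 : 0 < M by apply/lt_0_INR/ltP.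
have few_P_neg : INR (count P r) < M / 2 -> \big[Rplus/0]_(k <- r | P k) a k < 0.
  move=> few_P.
  have many_notP : M / 2 < INR (count (fun k => ~~ P k) r).
    have /(congr1 INR) := count_predC P r.
    by rewrite plus_INR -/M; change (count (predC P) r) with (count (fun k => ~~ P k) r); lra.
  have has_notP : has (fun k => ~~ P k) r.
    by rewrite has_count lt0n; apply/eqP => c0; rewrite c0 /= in many_notP; lra.
  have := big_Rlt c_big has_notP; rewrite big_Rconst -big_distrr /= -/M.
  have : M / 2 * T <= INR (count (fun k => ~~ P k) r) * T.
    by apply: Rmult_le_compat_r; lra.
  move=> T_le sum_gt.
  have : T < \big[Rplus/0]_(k <- r | ~~ P k) c k.
    by apply: (Rmult_lt_reg_l (M / 2)); lra.
  lra.
have has_P : has P r.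
  apply/negPn/negP => no_P; have := few_P_neg.
  rewrite big_hasC //; move: no_P; rewrite has_count -eqn0Ngt => /eqP ->.
  by rewrite /=; lra.
split=> //; case: (Rle_or_lt (M / 2) (INR (count P r))) => [le|lt].
  by left; apply: Rle_ge.
by right; apply: few_P_neg.
Qed.

Lemma iterates_mem (T : Type) (S : T -> Prop) (x : nat -> T) N :
  S (x 1%N) -> (forall k, (1 <= k <= N)%N -> S (x k.+1)) ->
  forall k, (1 <= k <= N.+1)%N -> S (x k).
Proof. by move=> S1 S_succ [|[|k]] // k_le; apply: S_succ; lia. Qed.

Section CSA.
Variables (n p : nat) (X : vec n -> Prop) (Delta : vec p -> Prop).
Variables (f : vec n -> R) (Lf : R) (g : vec n -> vec p -> R) (LgX : R).
Variables (fsub : vec n -> vec n) (gsub : vec n -> vec p -> vec n).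
Variables (w : vec n -> R) (gw : vec n -> vec n) (D : R) (xstar : vec n).
Variables (N s : nat) (x : nat -> vec n) (delta : nat -> vec p) (eta gamma : nat -> R).

Hypotheses (X_convex : convex_set X)
  (w_grad : forall y, X y -> has_gradient_at w y (gw y))
  (w_strong : strongly_convex_on X w 1)
  (D_diam : forall y z, X y -> X z -> bregman w gw y z <= D ^ 2).
Hypotheses (f_lip : lipschitz_on (fun _ => True) f Lf)
  (g_lip : forall d, Delta d -> lipschitz_on (fun _ => True) (fun y => g y d) LgX)
  (fsub_sub : forall y, X y -> is_subgradient f y (fsub y))
  (gsub_sub : forall y d, X y -> Delta d -> is_subgradient (fun z => g z d) y (gsub y d)).
Hypotheses (xstar_in : X xstar) (xstar_feasible : forall d, Delta d -> g xstar d <= 0).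
Hypotheses (x1_in : X (x 1%N))
  (delta_in : forall k, (1 <= k <= N)%N -> Delta (delta k))
  (gamma_pos : forall k, (1 <= k <= N)%N -> 0 < gamma k)
  (x_prox : forall k, (1 <= k <= N)%N ->
     is_prox X w gw (x k) (vscale (gamma k) (csa_dir fsub gsub g (x k) (delta k) (eta k))) (x k.+1)).

Local Notation h k := (csa_dir fsub gsub g (x k) (delta k) (eta k)).
Local Notation inBk := (inB g x delta eta).

Lemma csa_iterates_mem k : (1 <= k <= N.+1)%N -> X (x k).
Proof. exact: (@iterates_mem _ X x N x1_in (fun j jN => (x_prox jN).1)). Qed.

Lemma csa_dir_feasible k : inBk k -> h k = fsub (x k).
Proof. by rewrite /inB /Defs.Rleb /csa_dir; case: Rle_dec. Qed.

Lemma csa_dir_sq_le k : (1 <= k <= N)%N ->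
  dot (h k) (h k) <= (if inBk k then Lf else LgX) ^ 2.
Proof.
move=> kN; have Xk : X (x k) by apply: csa_iterates_mem; lia.
rewrite /inB /Defs.Rleb /csa_dir; case: (Rle_dec (g (x k) (delta k)) (eta k)) => /= _.
  exact: subgradient_sq_le f_lip (fsub_sub Xk).
exact: subgradient_sq_le (g_lip (delta_in kN)) (gsub_sub Xk (delta_in kN)).
Qed.

Lemma csa_dir_infeasible k : (1 <= k <= N)%N -> ~~ inBk k ->
  eta k < dot (h k) (vsub (x k) xstar).
Proof.
move=> kN; have Xk : X (x k) by apply: csa_iterates_mem; lia.
have cut := subgradient_cut (gsub_sub Xk (delta_in kN)) (xstar_feasible (delta_in kN)).
rewrite /inB /Defs.Rleb /csa_dir; case: (Rle_dec (g (x k) (delta k)) (eta k)) => /= [//|nle _].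
have := Rnot_le_lt _ _ nle; lra.
Qed.

Lemma csa_step k : (1 <= k <= N)%N ->
  gamma k * dot (h k) (vsub (x k) xstar) <=
  gamma k ^ 2 * (if inBk k then Lf else LgX) ^ 2 / 2
  + (bregman w gw (x k) xstar - bregman w gw (x k.+1) xstar).
Proof.
move=> kN; have Xk : X (x k) by apply: csa_iterates_mem; lia.
have := prox_descent w_grad X_convex w_strong Xk (x_prox kN) xstar_in.
rewrite !dot_scalel dot_scaler.
have := Rmult_le_compat_l _ _ _ (pow2_ge_0 (gamma k)) (csa_dir_sq_le kN).
lra.
Qed.

Lemma csa_regret_bound : (1 <= s <= N)%N ->
  \big[Rplus/0]_(s <= k < N.+1 | inBk k) (gamma k * dot (fsub (x k)) (vsub (x k) xstar))
  + \big[Rplus/0]_(s <= k < N.+1 | ~~ inBk k) (gamma k * eta k)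
  <= D ^ 2
     + 1 / 2 * \big[Rplus/0]_(s <= k < N.+1 | inBk k) (gamma k ^ 2 * Lf ^ 2)
     + 1 / 2 * \big[Rplus/0]_(s <= k < N.+1 | ~~ inBk k) (gamma k ^ 2 * LgX ^ 2).
Proof.
move=> /andP[s1 sN].
set a := fun k => gamma k * dot (h k) (vsub (x k) xstar).
set e := fun k => gamma k ^ 2 * (if inBk k then Lf else LgX) ^ 2 / 2.
set b := fun k => bregman w gw (x k) xstar.
have step k : (s <= k < N.+1)%N -> a k <= e k + (b k - b k.+1).
  by move=> kN; apply: csa_step; lia.
have telescoped := @sum_le_telescope a e b s N.+1 (leqW sN) step.
have lower : \big[Rplus/0]_(s <= k < N.+1 | inBk k) (gamma k * dot (fsub (x k)) (vsub (x k) xstar))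
  + \big[Rplus/0]_(s <= k < N.+1 | ~~ inBk k) (gamma k * eta k)
  <= \big[Rplus/0]_(s <= k < N.+1) a k.
  rewrite [X in _ <= X](bigID inBk) /=; apply: Rplus_le_compat.
    by apply/Req_le/eq_bigr => k /csa_dir_feasible; rewrite /a => ->.
  apply: big_Rle => k; rewrite mem_index_iota => kN notB.
  have kN' : (1 <= k <= N)%N by lia.
  apply: Rmult_le_compat_l; first exact: Rlt_le (gamma_pos kN').
  exact: Rlt_le (csa_dir_infeasible kN' notB).
have split_e : \big[Rplus/0]_(s <= k < N.+1) e k =
  1 / 2 * \big[Rplus/0]_(s <= k < N.+1 | inBk k) (gamma k ^ 2 * Lf ^ 2)
  + 1 / 2 * \big[Rplus/0]_(s <= k < N.+1 | ~~ inBk k) (gamma k ^ 2 * LgX ^ 2).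
  rewrite (bigID inBk) /= !big_distrr /=.
  by congr (_ + _); apply: eq_bigr => k Bk; rewrite /e ?(negbTE Bk) ?Bk; field.
have bs_le : b s <= D ^ 2 by apply: D_diam xstar_in; apply: csa_iterates_mem; lia.
have bN_ge0 : 0 <= b N.+1.
  by apply: (bregman_ge0 w_grad w_strong _ xstar_in); apply: csa_iterates_mem; lia.
lra.
Qed.

End CSA.

Unset Implicit Arguments.

Theorem mainTheorem16
  (n p : nat) (X : vec n -> Prop) (Delta : vec p -> Prop)
  (f : vec n -> R) (Lf : R) (g : vec n -> vec p -> R) (LgX LgD : R)
  (fsub : vec n -> vec n) (gsub : vec n -> vec p -> vec n)
  (xstar : vec n) (w : vec n -> R) (gw : vec n -> vec n) (D : R)
  (N s : nat) (x : nat -> vec n) (delta : nat -> vec p) (eta gamma : nat -> R) :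
  (* Setting *)
  convex_set X -> compact_set X ->
  convex_fun f -> lipschitz_on (fun _ => True) f Lf ->
  compact_set Delta ->
  (forall d, Delta d -> convex_fun (fun y => g y d)) ->
  (forall d, Delta d -> lipschitz_on (fun _ => True) (fun y => g y d) LgX) ->
  (forall y, X y -> lipschitz_on Delta (g y) LgD) ->
  (forall y, X y -> is_subgradient f y (fsub y)) ->
  (forall y d, X y -> Delta d -> is_subgradient (fun z => g z d) y (gsub y d)) ->
  is_optimal X f g Delta xstar ->
  C1_on X w gw -> strongly_convex_on X w 1 ->
  0 <= D ->
  is_max_over (fun q : vec n * vec n => X q.1 /\ X q.2)
              (fun q => bregman w gw q.1 q.2) (D ^ 2) ->
  (* Algorithm *)
  (1 <= s <= N)%N ->
  X (x 1%N) ->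
  (forall k, (1 <= k <= N)%N -> Delta (delta k)) ->
  (forall k, (1 <= k <= N)%N -> 0 < eta k) ->
  (forall k, (1 <= k <= N)%N -> 0 < gamma k) ->
  (forall k, (1 <= k <= N)%N ->
     is_prox X w gw (x k)
       (vscale (gamma k) (csa_dir fsub gsub g (x k) (delta k) (eta k))) (x k.+1)) ->
  (* hypothesis: (N-s+1)/2 * min_{k in N} gamma_k eta_k > ... (min over empty set = +oo) *)
  (forall k, (s <= k <= N)%N -> inB g x delta eta k = false ->
     INR (N - s + 1) / 2 * (gamma k * eta k) >
       D ^ 2
       + 1 / 2 * \big[Rplus/0]_(s <= j < N.+1 | inB g x delta eta j) (gamma j ^ 2 * Lf ^ 2)
       + 1 / 2 * \big[Rplus/0]_(s <= j < N.+1 | ~~ inB g x delta eta j) (gamma j ^ 2 * LgX ^ 2)) ->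
  (* conclusion *)
  (exists k, (s <= k <= N)%N /\ inB g x delta eta k = true) /\
  (INR (count (inB g x delta eta) (index_iota s N.+1)) >= INR (N - s + 1) / 2
   \/ \big[Rplus/0]_(s <= k < N.+1 | inB g x delta eta k)
        (gamma k * dot (fsub (x k)) (vsub (x k) xstar)) < 0).
Proof.
move=> X_convex _ _ f_lip _ _ g_lip _ fsub_sub gsub_sub [xstar_in [[G [[_ G_max] G_le0]] _]]
  [w_grad _] w_strong _ [_ D_diam] sN x1_in delta_in _ gamma_pos x_prox gap.
have xstar_feasible d : Delta d -> g xstar d <= 0.
  by move=> /G_max; lra.
have regret := csa_regret_bound X_convex w_grad w_strong
  (fun y z Xy Xz => D_diam (y, z) (conj Xy Xz)) f_lip g_lip fsub_sub gsub_sub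
  xstar_in xstar_feasible x1_in delta_in gamma_pos x_prox sN.
have size_r : size (index_iota s N.+1) = (N - s + 1)%N by rewrite size_iota; lia.
rewrite -size_r in gap *.
have [||k|/hasP[k k_in Bk] alt] := half_count_dichotomy _ _ _ regret.
- by rewrite size_r addn1.
- have sum_ge0 P c : 0 <= 1 / 2 * \big[Rplus/0]_(s <= j < N.+1 | P j) (gamma j ^ 2 * c ^ 2).
    by apply: Rmult_le_pos; [lra | apply: big_Rge0 => j _; apply/Rmult_le_pos/pow2_ge_0/pow2_ge_0].
  by have := pow2_ge_0 D; have := sum_ge0 (inB g x delta eta) Lf; have := sum_ge0 (fun j => ~~ inB g x delta eta j) LgX; lra.
- by rewrite mem_index_iota => k_in /negbTE; apply: gap; lia.
- split=> //; exists k; split=> //.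
  by move: k_in; rewrite mem_index_iota; lia.
Qed.
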